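(* Let $a,x$ be integers with $3\le a\le x$, let $\lambda=(x,x,ax)$ and $n=x(a+2)$, and suppose $n-1$ is coprime to both $a$ and $x$. For $1\le i\le n-2$ write uniquely $i=(a+2)r_i+p_i$ with integers $0\le r_i<x$ and $0\le p_i<a+2$, let $f(i)=ar_i-(2x-1)p_i$, and for $s\in\mathbb{Z}$ let $F_s=\{i\in\{1,\dots,n-2\}: s=-\lfloor f(i)/(n-1)\rfloor\}$. Then for every $1\le i\le n-2$ and every integer $s$, $i\in F_s$ if and only if $n-1-i\in F_{2-s}$. *)

From mathcomp Require Import all_boot all_order all_algebra.
Set Implicit Arguments. Unset Strict Implicit. Unset Printing Implicit Defensive.
Import Order.TTheory GRing.Theory Num.Theory.

Definition nn (a x : nat) : nat := x * (a + 2).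

Definition r_ (a i : nat) : nat := i %/ (a + 2).
Definition p_ (a i : nat) : nat := i %% (a + 2).

Definition f_ (a x i : nat) : int :=
  ((a * r_ a i)%:Z - (2 * x%:Z - 1) * (p_ a i)%:Z)%R.

(* F_s = { i in {1,...,n-2} : s = - floor (f(i)/(n-1)) };
   for the positive divisor n-1, intdiv's divz is floor division. *)
Definition F_ (a x : nat) (s : int) : pred nat :=
  fun i => (1 <= i <= nn a x - 2)%N &&
           (s == - (f_ a x i %/ (nn a x - 1)%:Z)%Z)%R.

From mathcomp Require Import all_boot all_order all_algebra.
From mathcomp Require Import zify ring.
Set Implicit Arguments. Unset Strict Implicit. Unset Printing Implicit Defensive.
Import Order.TTheory GRing.Theory Num.Theory.

(* Write N = n - 1.  Reflecting i to N - i reflects both digits of i in base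
   a + 2, which turns f into -f - N, so floor (f/N) becomes -floor (f/N) - 2
   as soon as N does not divide f(i).  Modulo N, f(i) = a (r_i + x p_i); as N
   is coprime to a, N would have to divide r_i + x p_i, which lies strictly
   between 0 and N when 0 < i < N. *)

Lemma divzN_ndvd (m d : int) :
  (0 < d)%R -> ~~ (d %| m)%Z -> ((- m) %/ d)%Z = (- (m %/ d)%Z - 1)%R.
Proof.
move=> d_gt0 ndvd_dm.
have mod_gt0 : (0 < (m %% d)%Z)%R.
  rewrite lt0r modz_ge0 ?andbT; last by rewrite gt_eqF.
  by apply: contra ndvd_dm => /eqP/dvdz_mod0P.
have mod_lt : ((m %% d)%Z < d)%R by exact: ltz_pmod.
have -> : (- m = (- (m %/ d)%Z - 1) * d + (d - (m %% d)%Z))%R.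
  by rewrite {1}(divz_eq m d); ring.
rewrite divzMDl ?gt_eqF // [X in (_ + X)%R]divz_small ?addr0 //.
by rewrite gez0_abs ?ltW //; lia.
Qed.

Lemma rev_divn_eq k m i : (0 < m)%N -> (i < k * m)%N ->
  (k * m - 1 - i = (k - 1 - i %/ m) * m + (m - 1 - i %% m))%N.
Proof.
move=> m_gt0 i_lt.
have mod_lt : (i %% m < m)%N by rewrite ltn_mod.
have div_lt : (i %/ m < k)%N by rewrite ltn_divLR.
rewrite {1}(divn_eq i m); nia.
Qed.

Lemma divn_rev k m i : (0 < m)%N -> (i < k * m)%N ->
  ((k * m - 1 - i) %/ m = k - 1 - i %/ m)%N.
Proof.
move=> m_gt0 i_lt.
rewrite rev_divn_eq // divnMDl // [X in _ + X]divn_small ?addn0 //.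
have : (i %% m < m)%N by rewrite ltn_mod.
lia.
Qed.

Lemma modn_rev k m i : (0 < m)%N -> (i < k * m)%N ->
  ((k * m - 1 - i) %% m = m - 1 - i %% m)%N.
Proof.
move=> m_gt0 i_lt; rewrite rev_divn_eq // modnMDl modn_small //.
have : (i %% m < m)%N by rewrite ltn_mod.
lia.
Qed.

Section Reflection.

Variables a x : nat.
Hypothesis x_gt0 : (0 < x)%N.

Local Notation n := (nn a x).
Local Notation N := (nn a x - 1)%N.
Local Notation r := (r_ a).
Local Notation p := (p_ a).
Local Notation f := (f_ a x).

Lemma r_p_eq i : i = (r i * (a + 2) + p i)%N.
Proof. exact: divn_eq. Qed.

Lemma r_lt i : (i < n)%N -> (r i < x)%N.
Proof. by rewrite /r_ ltn_divLR // addn2. Qed.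

Lemma p_lt i : (p i < a + 2)%N.
Proof. by rewrite /p_ ltn_mod addn2. Qed.

Lemma r_rev i : (i < n)%N -> r (N - i) = (x - 1 - r i)%N.
Proof. by move=> i_lt; rewrite /r_ divn_rev // addn2. Qed.

Lemma p_rev i : (i < n)%N -> p (N - i) = (a + 1 - p i)%N.
Proof.
by move=> i_lt; rewrite /p_ modn_rev //; rewrite /nn in i_lt; lia.
Qed.

Lemma f_rev i : (i < n)%N -> f (N - i) = (- f i - N%:Z)%R.
Proof.
move=> i_lt; have := r_lt i_lt; have := p_lt i.
rewrite /f_ r_rev // p_rev // /nn; nia.
Qed.

Lemma f_add_p_mulN i : (f i + (p i * N)%:Z = (a * (r i + x * p i))%:Z)%R.
Proof. by rewrite /f_ /nn; nia. Qed.

Lemma r_add_x_p_gt0 i : (0 < i)%N -> (0 < r i + x * p i)%N.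
Proof. by move=> i_gt0; have := r_p_eq i; nia. Qed.

Lemma r_add_x_p_lt i : (i < N)%N -> (r i + x * p i < N)%N.
Proof.
move=> i_lt; have := r_p_eq i; have := p_lt i.
by rewrite /nn in i_lt *; nia.
Qed.

Lemma dvdz_f i : coprime N a ->
  (N%:Z %| f i)%Z = (N %| r i + x * p i)%N.
Proof.
move=> coNa.
have dvd_pN : (N%:Z %| (p i * N)%:Z)%Z by rewrite PoszM dvdz_mull.
by rewrite -(rpredDr _ dvd_pN) f_add_p_mulN dvdzE /= Gauss_dvdr.
Qed.

Lemma f_ndvd i : coprime N a -> (0 < i < N)%N -> ~~ (N%:Z %| f i)%Z.
Proof.
move=> coNa /andP[i_gt0 i_lt]; rewrite dvdz_f //.
apply/negP => /(dvdn_leq (r_add_x_p_gt0 i_gt0)).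
by rewrite leqNgt r_add_x_p_lt.
Qed.

Lemma floor_f_rev i : coprime N a -> (0 < i < N)%N ->
  (f (N - i) %/ N%:Z)%Z = (- (f i %/ N%:Z)%Z - 2)%R.
Proof.
move=> coNa i_range; have N_gt0 : (0 < N%:Z)%R by rewrite /nn; lia.
rewrite f_rev; last by rewrite /nn in i_range *; lia.
have -> : (- f i - N%:Z = -1 * N%:Z + - f i)%R by ring.
rewrite divzMDl ?gt_eqF //.
by rewrite divzN_ndvd ?f_ndvd //; ring.
Qed.

End Reflection.

Theorem proposition4p10 (a x : nat) :
  (3 <= a)%N -> (a <= x)%N ->
  coprime (nn a x - 1) a -> coprime (nn a x - 1) x ->
  forall (i : nat) (s : int), (1 <= i <= nn a x - 2)%N ->
    (i \in F_ a x s) <-> (nn a x - 1 - i \in F_ a x (2 - s)%R).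
Proof.
move=> a_ge3 le_ax coNa _ i s i_range.
have x_gt0 : (0 < x)%N by lia.
have rev_range : (1 <= nn a x - 1 - i <= nn a x - 2)%N by lia.
rewrite /in_mem /= /F_ i_range rev_range /= floor_f_rev //; last by lia.
by split=> /eqP eq_s; apply/eqP; lia.
Qed.
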